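(* Let $G$ be a simple graph on $X=\{x_1,\ldots,x_n\}$ and let $G'$ be the graph obtained from $G$ by duplicating every vertex of $G$ exactly $k-1$ times. Then $G$ is shellable if and only if $G'$ is $k$-shellable.
   Context: Duplicating each vertex $k-1$ times gives the graph $G'$ with vertex set $\{x_{ij}:1\le i\le n,1\le j\le k\}$ and edge set $\{x_{ir}x_{js}: x_ix_j\in E(G),\ 1\le r,s\le k\}$. The independence complex $\Delta_G$ of a graph $G$ has as faces the sets of pairwise non-adjacent vertices. A graph is shellable (resp. $k$-shellable) if $\Delta_G$ is. $\langle F_1,\ldots,F_s\rangle$ denotes the simplicial complex with facets $F_1,\dots,F_s$. A complex is shellable if its facets can be ordered $F_1,\ldots,F_r$ with $\langle F_j\rangle\cap\langle F_1,\ldots,F_{j-1}\rangle$ pure of dimension $\dim F_j-1$ for all $j\ge2$. A complex $\Gamma$ of dimension $d$ is $k$-shellable ($1\le k\le d+1$) if its facets can be ordered $F_1,\ldots,F_r$ such that for every $j=2,\ldots,r$, $\Gamma_j=\langle F_j\rangle\cap\langle F_1,\ldots,F_{j-1}\rangle$ satisfies (i) $\Gamma_j$ is generated by a nonempty set of faces of $\langle F_j\rangle$ of dimension $|F_j|-k-1$; (ii) if $\Gamma_j$ has more than one facet, then for every two distinct facets $\sigma,\tau$ of $\Gamma_j$, $F_j\subseteq\sigma\cup\tau$. *)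

From mathcomp Require Import all_boot.
Set Implicit Arguments. Unset Strict Implicit. Unset Printing Implicit Defensive.

Section Complexes.
Variable T : finType.

Definition gen (s : seq {set T}) : {set {set T}} :=
  [set sigma : {set T} | has (fun F : {set T} => sigma \subset F) s].

Definition facets (D : {set {set T}}) : {set {set T}} :=
  [set F in D | [forall G in D, (F \subset G) ==> (G == F)]].

(* d + 1 where d = dim D (maximal cardinality of a face) *)
Definition dim1 (D : {set {set T}}) : nat := \max_(F in D) #|F|.

(* G_j = <F_j> ∩ <F_1,...,F_{j-1}>  (j is 0-indexed here: s`_j with j >= 1) *)
Definition shell_int (s : seq {set T}) (j : nat) : {set {set T}} :=
  gen [:: nth set0 s j] :&: gen (take j s).

Definition facet_order (D : {set {set T}}) (s : seq {set T}) : Prop :=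
  uniq s /\ [set F in s] = facets D.

Definition pure_card (G : {set {set T}}) (m : nat) : Prop :=
  forall sigma, sigma \in facets G -> #|sigma| = m.

Definition shellable (D : {set {set T}}) : Prop :=
  exists s : seq {set T}, facet_order D s /\
    forall j, 0 < j < size s ->
      pure_card (shell_int s j) (#|nth set0 s j| - 1).

Definition k_shellable (D : {set {set T}}) (k : nat) : Prop :=
  1 <= k <= dim1 D /\
  exists s : seq {set T}, facet_order D s /\
    forall j, 0 < j < size s ->
      let Fj := nth set0 s j in
      let Gj := shell_int s j in
      (* (i) Gj is generated by a nonempty set of faces of <Fj> of
             dimension |Fj| - k - 1, i.e. of cardinality |Fj| - k *)
      (k <= #|Fj| /\
       exists A : seq {set T}, A != [::] /\
         (forall sigma, sigma \in A -> (sigma \subset Fj) /\ #|sigma| = #|Fj| - k) /\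
         Gj = gen A) /\
      (forall sigma tau, sigma \in facets Gj -> tau \in facets Gj ->
         sigma != tau -> Fj \subset sigma :|: tau).

End Complexes.

Definition indep_complex (T : finType) (e : rel T) : {set {set T}} :=
  [set sigma : {set T} | [forall x in sigma, forall y in sigma, ~~ e x y]].

(* G' : each vertex x of G replaced by copies (x, r), r < k;
   (x,r) ~ (y,s) iff x ~ y in G *)
Definition dup_rel (V : finType) (e : rel V) (k : nat) : rel (V * 'I_k) :=
  fun p q => e p.1 q.1.
Arguments dup_rel {V} e k p q.

(** Duplicating vertices replaces the independence complex of G by its
    preimage under the projection V * 'I_k -> V: a set of copies is
    independent iff the set of vertices it projects onto is.  The facets of
    the preimage are exactly the blow-ups F * 'I_k of the facets F of the
    original complex, and the same holds for every shelling intersection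
    <F_j> ∩ <F_1,...,F_{j-1}>.  Blowing up multiplies cardinalities by k, so
    the intersection is pure of codimension one (facets of size |F_j| - 1)
    iff its blow-up is generated by faces of size k|F_j| - k; and two distinct
    faces of size |F_j| - 1 of F_j always cover F_j, which gives condition
    (ii) of k-shellability for free. *)
From mathcomp Require Import all_boot.
Set Implicit Arguments. Unset Strict Implicit. Unset Printing Implicit Defensive.

Section Complexes.
Variable T : finType.
Implicit Types (D G : {set {set T}}) (s : seq {set T}) (A B F : {set T}).

Lemma facetsP D F :
  reflect (F \in D /\ forall B, B \in D -> F \subset B -> B = F) (F \in facets D).
Proof.
rewrite inE; apply: (iffP andP) => -[FD maxF]; split=> //.
  by move=> B BD FB; apply/eqP; move/forallP/(_ B): maxF; rewrite BD FB.
by apply/forall_inP=> B BD; apply/implyP=> FB; rewrite (maxF B BD FB).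
Qed.

Lemma genP s B : reflect (exists2 F, F \in s & B \subset F) (B \in gen s).
Proof. by rewrite inE; apply: hasP. Qed.

Lemma gen_subset_closed s A B : A \subset B -> B \in gen s -> A \in gen s.
Proof.
by move=> AB /genP[F Fs BF]; apply/genP; exists F; rewrite ?(subset_trans AB).
Qed.

Lemma shell_int_subset_closed s j A B :
  A \subset B -> B \in shell_int s j -> A \in shell_int s j.
Proof. by move=> AB /setIP[??]; apply/setIP; split; apply: gen_subset_closed AB _. Qed.

Lemma shell_intS s j B : B \in shell_int s j -> B \subset nth set0 s j.
Proof. by case/setIP=> /genP[F]; rewrite inE => /eqP->. Qed.

Lemma set0_shell_int s j : 0 < j < size s -> set0 \in shell_int s j.
Proof.
case/andP=> j_gt0 lt_js; apply/setIP; split; apply/genP.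
  by exists (nth set0 s j); rewrite ?inE ?sub0set.
by exists (nth set0 (take j s) 0); rewrite ?sub0set // mem_nth // size_take lt_js.
Qed.

Lemma exists_facet_above D B : B \in D -> exists2 F, F \in facets D & B \subset F.
Proof.
move=> BD; pose P F := (F \in D) && (B \subset F).
have P_B : P B by rewrite /P BD subxx.
case: (arg_maxnP (fun F => #|F|) P_B) => F /andP[FD BF] maxF.
exists F => //; apply/facetsP; split=> // C CD FC; apply/eqP.
by rewrite eq_sym eqEcard FC; apply: maxF; rewrite /P CD (subset_trans BF FC).
Qed.

Lemma facet_card_gt0 D A F : A \in D -> 0 < #|A| -> F \in facets D -> 0 < #|F|.
Proof.
move=> AD A_gt0 /facetsP[_ maxF]; rewrite card_gt0; apply: contraTneq A_gt0 => F0.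
by rewrite F0 in maxF; rewrite (maxF A AD (sub0set _)) cards0.
Qed.

Lemma mem_facets_gen s B : B \in facets (gen s) -> B \in s.
Proof.
case/facetsP=> /genP[F Fs BF] maxB.
by rewrite -(maxB F) //; apply/genP; exists F.
Qed.

Lemma gen_facets G :
  (forall A B, A \subset B -> B \in G -> A \in G) -> gen (enum (facets G)) = G.
Proof.
move=> G_closed; apply/setP=> B; apply/genP/idP.
  by case=> F; rewrite mem_enum => /facetsP[FG _] BF; apply: G_closed BF FG.
by case/exists_facet_above=> F Ff BF; exists F; rewrite ?mem_enum.
Qed.

Lemma setU_eq_of_card_pred F A B :
  A \subset F -> B \subset F -> #|A| = #|F| - 1 -> #|B| = #|F| - 1 -> A != B ->
  A :|: B = F.
Proof.
move=> AF BF cardA cardB neqAB; apply/eqP; rewrite eqEcard subUset AF BF /=.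
have /proper_card : A \proper A :|: B.
  rewrite properE subsetUl subUset subxx /=.
  by apply: contra neqAB => BA; rewrite eq_sym eqEcard BA cardA cardB leqnn.
by rewrite cardA subn1; apply: leq_trans (leqSpred _).
Qed.

End Complexes.

Definition shell_step (T : finType) (s : seq {set T}) (j : nat) : Prop :=
  pure_card (shell_int s j) (#|nth set0 s j| - 1).

Definition k_shell_step (T : finType) (s : seq {set T}) (j k : nat) : Prop :=
  let Fj := nth set0 s j in
  let Gj := shell_int s j in
  (k <= #|Fj| /\
   exists A : seq {set T}, A != [::] /\
     (forall sigma, sigma \in A -> (sigma \subset Fj) /\ #|sigma| = #|Fj| - k) /\
     Gj = gen A) /\
  (forall sigma tau, sigma \in facets Gj -> tau \in facets Gj ->
     sigma != tau -> Fj \subset sigma :|: tau).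

Section Duplication.
Variables (V : finType) (k : nat).
Hypothesis k_gt0 : 0 < k.
Implicit Types (A F : {set V}) (B C : {set V * 'I_k}) (s : seq {set V})
  (D G : {set {set V}}).

Definition dupset A : {set V * 'I_k} := [set p | p.1 \in A].
Definition projset B : {set V} := [set x | [exists r, (x, r) \in B]].
Definition dup_complex D : {set {set V * 'I_k}} := [set B | projset B \in D].

Lemma sub_dupset B A : (B \subset dupset A) = (projset B \subset A).
Proof.
apply/subsetP/subsetP => subBA.
  by move=> x /[!inE] /existsP[r /subBA]; rewrite inE.
by move=> [x r] xrB; rewrite inE subBA // inE; apply/existsP; exists r.
Qed.

Lemma dupsetK : cancel dupset projset.
Proof.
move=> A; apply/setP=> x; rewrite inE; apply/existsP/idP => [[r]|xA].
  by rewrite inE.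
by exists (Ordinal k_gt0); rewrite inE.
Qed.

Lemma dupset_inj : injective dupset. Proof. exact: can_inj dupsetK. Qed.

Lemma dupsetS A F : A \subset F -> dupset A \subset dupset F.
Proof. by rewrite sub_dupset dupsetK. Qed.

Lemma projsetS B C : B \subset C -> projset B \subset projset C.
Proof. by move=> BC; rewrite -sub_dupset (subset_trans BC) // sub_dupset. Qed.

Lemma card_dupset A : #|dupset A| = #|A| * k.
Proof.
have -> : dupset A = setX A [set: 'I_k] by apply/setP=> -[x r]; rewrite !inE andbT.
by rewrite cardsX cardsT card_ord.
Qed.

Lemma dupsetU A F : dupset (A :|: F) = dupset A :|: dupset F.
Proof. by apply/setP=> p; rewrite !inE. Qed.

Lemma dupset_in_dup_complex D A : (dupset A \in dup_complex D) = (A \in D).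
Proof. by rewrite inE dupsetK. Qed.

Lemma facets_dup_complex D : facets (dup_complex D) = dupset @: facets D.
Proof.
apply/setP=> B; apply/idP/imsetP.
  case/facetsP=> /[!inE] BD maxB.
  have BE : dupset (projset B) = B.
    by apply: maxB; rewrite ?dupset_in_dup_complex // sub_dupset.
  exists (projset B) => //; apply/facetsP; split=> // F FD BF.
  by rewrite -[F]dupsetK (maxB (dupset F)) ?dupset_in_dup_complex // -BE dupsetS.
case=> A /facetsP[AD maxA] ->; apply/facetsP; split; first by rewrite inE dupsetK.
move=> C /[!inE] CD AC; have /projsetS := AC; rewrite dupsetK => /(maxA _ CD) CA.
by apply/eqP; rewrite eqEsubset AC sub_dupset CA subxx.
Qed.

Lemma gen_map_dupset s : gen (map dupset s) = dup_complex (gen s).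
Proof.
by apply/setP=> B; rewrite !inE has_map; apply: eq_has => F /=; rewrite sub_dupset.
Qed.

Lemma shell_int_map_dupset s j :
  j < size s -> shell_int (map dupset s) j = dup_complex (shell_int s j).
Proof.
move=> lt_js; rewrite /shell_int (nth_map set0) // -map_take.
by rewrite -[[:: _]]/(map dupset [:: _]) !gen_map_dupset; apply/setP=> B; rewrite !inE.
Qed.

Lemma facet_order_map_dupset D s :
  facet_order (dup_complex D) (map dupset s) <-> facet_order D s.
Proof.
rewrite /facet_order facets_dup_complex (map_inj_uniq dupset_inj).
have -> : [set B in map dupset s] = dupset @: [set F in s].
  apply/setP=> B; rewrite inE.
  by apply/mapP/imsetP=> -[F Fs ->]; exists F; rewrite ?inE in Fs *.
by split=> -[-> E]; split=> //; [apply: (imset_inj dupset_inj) | rewrite E].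
Qed.

Lemma facet_order_dup_complex D (s' : seq {set V * 'I_k}) :
  facet_order (dup_complex D) s' -> exists s, s' = map dupset s.
Proof.
case=> _ sE; exists (map projset s'); rewrite -map_comp map_id_in // => B Bs'.
have : B \in [set B in s'] by rewrite inE.
by rewrite sE facets_dup_complex => /imsetP[A _ ->] /=; rewrite dupsetK.
Qed.

Lemma dim1_dup_complex D A : A \in D -> #|A| * k <= dim1 (dup_complex D).
Proof.
by rewrite -card_dupset -(dupset_in_dup_complex D); apply: leq_bigmax_cond.
Qed.

Lemma shell_step_dup s j : 0 < j < size s -> 0 < #|nth set0 s j| ->
  shell_step s j -> k_shell_step (map dupset s) j k.
Proof.
move=> j_bnd Fj_gt0 pureG; have lt_js : j < size s by case/andP: j_bnd.
rewrite /k_shell_step shell_int_map_dupset // (nth_map set0) // card_dupset.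
set Fj := nth set0 s j; set G := shell_int s j.
split; [split; first by rewrite leq_pmull|].
  exists (map dupset (enum (facets G))); split; [|split].
  - have [F Ff _] := exists_facet_above (set0_shell_int j_bnd).
    by rewrite -mem_enum in Ff; case: (enum _) Ff.
  - move=> sigma /mapP[t]; rewrite mem_enum => tf ->.
    rewrite dupsetS ?card_dupset ?(pureG t tf) ?mulnBl ?mul1n //.
    by apply: shell_intS; case/facetsP: tf.
  - by rewrite gen_map_dupset gen_facets //; apply: shell_int_subset_closed.
rewrite facets_dup_complex => _ _ /imsetP[a af ->] /imsetP[b bf ->] neq_ab.
have [aG bG] : a \in G /\ b \in G by case/facetsP: af; case/facetsP: bf.
have neq_ab' : a != b by apply: contraNneq neq_ab => ->.
rewrite -dupsetU dupsetS //.
by rewrite (setU_eq_of_card_pred (shell_intS aG) (shell_intS bG) (pureG a af) (pureG b bf)).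
Qed.

Lemma dup_shell_step s j : j < size s ->
  k_shell_step (map dupset s) j k -> shell_step s j.
Proof.
move=> lt_js [[_ [A [_ [cardA GA]]]] _] t tf.
rewrite shell_int_map_dupset // (nth_map set0) // card_dupset in cardA GA.
have : dupset t \in facets (gen A) by rewrite -GA facets_dup_complex imset_f.
move=> /mem_facets_gen /cardA[_]; rewrite card_dupset => card_t.
by apply/eqP; rewrite -(eqn_pmul2r k_gt0) card_t mulnBl mul1n.
Qed.

Theorem shellable_dup_complex D A : A \in D -> 0 < #|A| ->
  shellable D <-> k_shellable (dup_complex D) k.
Proof.
move=> AD A_gt0; split.
  case=> s [sD steps]; split.
    by rewrite k_gt0 (leq_trans _ (dim1_dup_complex AD)) // leq_pmull.
  exists (map dupset s); split; first exact/facet_order_map_dupset.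
  move=> j; rewrite size_map => j_bnd; apply: shell_step_dup (steps j j_bnd) => //.
  have lt_js : j < size s by case/andP: j_bnd.
  by apply: facet_card_gt0 AD A_gt0 _; case: sD => _ <-; rewrite inE mem_nth.
case=> _ [s' [s'D steps]]; have [s s'E] := facet_order_dup_complex s'D.
rewrite {}s'E size_map in s'D steps; exists s; split; first exact/facet_order_map_dupset.
by move=> j j_bnd; apply: dup_shell_step (steps j j_bnd); case/andP: j_bnd.
Qed.

End Duplication.

Lemma indep_complex_dup_rel (V : finType) (e : rel V) k :
  indep_complex (dup_rel e k) = dup_complex k (indep_complex e).
Proof.
apply/setP=> B; rewrite !inE; apply/forall_inP/forall_inP.
  move=> indepB x /[!inE] /existsP[r xrB]; apply/forall_inP=> y /[!inE] /existsP[r' yr'B].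
  by move/forall_inP/(_ (y, r') yr'B): (indepB (x, r) xrB).
move=> indepB [x r] xrB; apply/forall_inP=> -[y r'] yr'B.
have /indepB/forall_inP : x \in projset B by rewrite inE; apply/existsP; exists r.
by apply; rewrite inE; apply/existsP; exists r'.
Qed.

Theorem theorem4p2 (V : finType) (e : rel V) (k : nat) :
  symmetric e -> irreflexive e -> 0 < #|V| -> 0 < k ->
  shellable (indep_complex e) <-> k_shellable (indep_complex (dup_rel e k)) k.
Proof.
move=> _ e_irr /card_gt0P[v _] k_gt0.
have v_indep : [set v] \in indep_complex e.
  by rewrite inE; apply/forall_inP=> x /set1P->; apply/forall_inP=> y /set1P->; rewrite e_irr.
by rewrite indep_complex_dup_rel; apply: shellable_dup_complex v_indep _; rewrite ?cards1.
Qed.
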